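(* Let $\mathbf{x}\in\mathbb{R}^{3n}$ be a pose whose points are not all collinear, and let $F:\mathbb{R}\times\mathbb{R}^{3n}\to\mathbb{R}^{3n}$ be any map with $F(0,\mathbf{x})=\mathbf{x}$ and $t\mapsto F(t,\mathbf{x})$ differentiable at $t=0$. Define $\mathbf{x}(t):=\mathrm{RMSDAlign}(\mathbf{x},F(t,\mathbf{x}))$ and assume $\mathbf{x}(0)=\mathbf{x}$ and that the aligning rotation and translation are differentiable at $t=0$. Then $\frac{d}{dt}\frac1n\sum_i\mathbf{x}_i(t)\big|_{t=0}=0$ and $\sum_i(\mathbf{x}_i-\bar{\mathbf{x}})\times\frac{d}{dt}\mathbf{x}_i(t)\big|_{t=0}=0$, where $\bar{\mathbf{x}}=\frac1n\sum_i\mathbf{x}_i$.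
   Context: $\mathrm{RMSD}(\mathbf{x},\mathbf{x}')=\big(\frac1n\sum_i\|\mathbf{x}_i-\mathbf{x}'_i\|^2\big)^{1/2}$ for $\mathbf{x},\mathbf{x}'\in\mathbb{R}^{3n}$ (viewed as $n$ points in $\mathbb{R}^3$). $\mathrm{RMSDAlign}(\mathbf{x},\mathbf{x}')=\operatorname{argmin}_{\mathbf{x}^\dagger\in\{g\mathbf{x}'\mid g\in SE(3)\}}\mathrm{RMSD}(\mathbf{x},\mathbf{x}^\dagger)$, where $SE(3)$ acts on each point. *)

(* R : realType, poses are n x 3 matrices (row i = point i). *)
From HB Require Import structures.
From mathcomp Require Import all_boot all_order all_algebra.
From mathcomp Require Import all_classical all_reals all_analysis.
Set Implicit Arguments. Unset Strict Implicit. Unset Printing Implicit Defensive.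
Import Order.TTheory GRing.Theory Num.Theory.
Import numFieldNormedType.Exports.
Local Open Scope ring_scope.

Section Defs.
Variable R : realType.

Definition pt (n : nat) (x : 'M[R]_(n,3)) (i : 'I_n) : 'rV[R]_3 := row i x.

Definition sqnorm (v : 'rV[R]_3) : R := \sum_(j < 3) v ord0 j ^+ 2.

Definition RMSD (n : nat) (x x' : 'M[R]_(n,3)) : R :=
  Num.sqrt (n%:R^-1 * \sum_(i < n) sqnorm (pt x i - pt x' i)).

Definition is_rotation (Q : 'M[R]_3) : Prop := Q^T *m Q = 1%:M /\ \det Q = 1.

(* action of the rigid motion (Q, T) in SE(3) on each point: x_i |-> x_i Q + T
   (row-vector convention) *)
Definition se3_act (n : nat) (Q : 'M[R]_3) (T : 'rV[R]_3) (x : 'M[R]_(n,3))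
  : 'M[R]_(n,3) := x *m Q + \matrix_(i < n, j < 3) T ord0 j.

(* y is an element of RMSDAlign(x, x'): a minimizer of RMSD(x, .) over the
   SE(3)-orbit of x' *)
Definition is_RMSDAlign (n : nat) (x x' y : 'M[R]_(n,3)) : Prop :=
  (exists Q T, is_rotation Q /\ y = se3_act Q T x') /\
  (forall Q T, is_rotation Q -> RMSD x y <= RMSD x (se3_act Q T x')).

Definition collinear (n : nat) (x : 'M[R]_(n,3)) : Prop :=
  exists (p d : 'rV[R]_3), forall i : 'I_n, exists s : R, pt x i = p + s *: d.

Definition centroid (n : nat) (x : 'M[R]_(n,3)) : 'rV[R]_3 :=
  n%:R^-1 *: \sum_(i < n) pt x i.

Definition cross (u v : 'rV[R]_3) : 'rV[R]_3 :=
  \row_(k < 3)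
    (if k == 0 :> nat then u ord0 (inord 1) * v ord0 (inord 2) - u ord0 (inord 2) * v ord0 (inord 1)
     else if k == 1 :> nat then u ord0 (inord 2) * v ord0 (inord 0) - u ord0 (inord 0) * v ord0 (inord 2)
     else u ord0 (inord 0) * v ord0 (inord 1) - u ord0 (inord 1) * v ord0 (inord 0)).

End Defs.

(* For every t the aligned pose xt is optimal within its own SE(3)-orbit.
   Optimality under translations forces xt to have the same column sums, hence
   the same centroid, as x.  Optimality under the rotations of the three
   coordinate planes is a first-order condition on tr(x^T xt P): it forces the
   cross-covariance x^T xt to be symmetric.  Both facts hold identically in t,
   so the derivative D of xt at 0 has zero column sums and x^T D symmetric,
   and these two facts say exactly that sum_i (x_i - c) x D_i = 0 for any c. *)

From HB Require Import structures.
From mathcomp Require Import all_boot all_order all_algebra.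
From mathcomp Require Import all_classical all_reals all_analysis.
From mathcomp Require Import ring lra.

Set Implicit Arguments.
Unset Strict Implicit.
Unset Printing Implicit Defensive.
Import Order.TTheory GRing.Theory Num.Theory.
Import numFieldNormedType.Exports.
Local Open Scope ring_scope.

Section MatrixDerivative.
Context {R : realFieldType} {V : normedModType R}.
Implicit Types (t v : V).

Lemma derivable_mulmx m p q (A : V -> 'M[R]_(m, p)) (B : V -> 'M[R]_(p, q)) t v :
  derivable A t v -> derivable B t v -> derivable (fun s => A s *m B s) t v.
Proof.
move=> /derivable_mxP dA /derivable_mxP dB; apply/derivable_mxP => i j.
rewrite (_ : (fun s => _) = \sum_k ((fun s => A s i k) * (fun s => B s k j))).
  by apply: derivable_sum => k; exact: derivableM.
by apply/funext => s; rewrite mxE fct_sumE.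
Qed.

Lemma derive_mulmxl m p q (A : 'M[R]_(m, p)) (M : V -> 'M[R]_(p, q)) t v :
  derivable M t v -> 'D_v (fun s => A *m M s) t = A *m 'D_v M t.
Proof.
move=> dM; have /derivable_mxP dM' := dM.
rewrite derive_mx; last exact: derivable_mulmx (derivable_cst _ _ _) dM.
apply/matrixP => i j; rewrite !mxE derive_mx //.
rewrite (_ : (fun s => _) = \sum_k (A i k \*o (fun s => M s k j))); last first.
  by apply/funext => s; rewrite mxE fct_sumE.
rewrite derive_sum => [|k]; last exact: derivableM (derivable_cst _ _ _) (dM' k j).
by apply: eq_bigr => k _; rewrite deriveMl // mxE.
Qed.

Lemma derive_trmx m p (M : V -> 'M[R]_(m, p)) t v :
  derivable M t v -> 'D_v (fun s => (M s)^T) t = ('D_v M t)^T.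
Proof.
move=> dM; have /derivable_mxP dM' := dM.
rewrite derive_mx; last by apply/derivable_mxP => i j; under eq_fun do rewrite mxE; exact: dM'.
apply/matrixP => i j; rewrite !mxE derive_mx // mxE.
by under eq_fun do rewrite mxE.
Qed.

End MatrixDerivative.

Section Trace.
Variable R : realFieldType.

Lemma lin_le_sqr_eq0 (a b : R) : (forall u, u * b <= u ^+ 2 * a) -> b = 0.
Proof.
move=> le_ba; pose k := `|a| + 1.
have a_lt_k : a < k by rewrite /k ltr_pwDr // (le_trans (ler_norm a)).
have k_neq0 : k != 0 by rewrite gt_eqF // (le_lt_trans (normr_ge0 a)) ?ltrDl.
have bE : b = (b / k) * k by rewrite divfK.
move: (b / k) bE (le_ba (b / k)) => c -> le_c.
have c2_le0 : c ^+ 2 <= 0 by nra.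
by apply/eqP; rewrite mulf_eq0 -sqrf_eq0 eq_le c2_le0 sqr_ge0.
Qed.

(* The stereographic parametrization of the unit circle reduces this to
   [lin_le_sqr_eq0]. *)
Lemma circle_le_eq0 (a b : R) :
  (forall c s, c ^+ 2 + s ^+ 2 = 1 -> (c - 1) * a + s * b <= 0) -> b = 0.
Proof.
move=> le_cs; apply: (@lin_le_sqr_eq0 a) => u.
have u2_gt0 : 0 < 1 + u ^+ 2 by rewrite ltr_pwDl // sqr_ge0.
have u2_neq0 : 1 + u ^+ 2 != 0 by rewrite gt_eqF.
have := le_cs ((1 - u ^+ 2) / (1 + u ^+ 2)) (2 * u / (1 + u ^+ 2)).
have -> : ((1 - u ^+ 2) / (1 + u ^+ 2)) ^+ 2 + (2 * u / (1 + u ^+ 2)) ^+ 2 = 1 by field.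
have -> : ((1 - u ^+ 2) / (1 + u ^+ 2) - 1) * a + 2 * u / (1 + u ^+ 2) * b
          = 2 / (1 + u ^+ 2) * (u * b - u ^+ 2 * a) by field.
by move=> /(_ erefl); rewrite pmulr_rle0 ?divr_gt0 // subr_le0.
Qed.

Lemma mxtrace_tmulE m p (z : 'M[R]_(m, p)) :
  \tr (z^T *m z) = \sum_i \sum_j z i j ^+ 2.
Proof.
rewrite /mxtrace exchange_big; apply: eq_bigr => j _.
by rewrite mxE; apply: eq_bigr => i _; rewrite mxE expr2.
Qed.

Lemma mxtrace_tmulBB m p (z w : 'M[R]_(m, p)) :
  \tr ((z - w)^T *m (z - w)) = \tr (z^T *m z) - 2 * \tr (z^T *m w) + \tr (w^T *m w).
Proof.
have wz : \tr (w^T *m z) = \tr (z^T *m w) by rewrite -mxtrace_tr trmx_mul trmxK.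
by rewrite mulmxBr !(linearB trmx) /= !mulmxBl !linearB /= wz; ring.
Qed.

Lemma mxtrace_tmul_ge0 m p (z : 'M[R]_(m, p)) : 0 <= \tr (z^T *m z).
Proof. by rewrite mxtrace_tmulE; do 2![apply: sumr_ge0 => ? _]; exact: sqr_ge0. Qed.

Lemma mxtrace_tmul_eq0 m p (z : 'M[R]_(m, p)) : \tr (z^T *m z) = 0 -> z = 0.
Proof.
rewrite mxtrace_tmulE => z0; apply/matrixP => i j; rewrite mxE.
have sq_ge0 (k : 'I_p) : true -> 0 <= z i k ^+ 2 by move=> _; exact: sqr_ge0.
have rows_ge0 (k : 'I_m) : true -> 0 <= \sum_l z k l ^+ 2.
  by move=> _; apply: sumr_ge0 => l _; exact: sqr_ge0.
have /eqP := @psumr_eq0P _ _ _ _ sq_ge0 (@psumr_eq0P _ _ _ _ rows_ge0 z0 i isT) j isT.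
by rewrite sqrf_eq0 => /eqP.
Qed.

Lemma mxtrace_tmul_translate n p (z : 'M[R]_(n, p)) (u : 'rV[R]_p) :
  let e : 'cV[R]_n := const_mx 1 in
  \tr ((z - e *m u)^T *m (z - e *m u))
  = \tr (z^T *m z) - 2 * \tr ((e^T *m z)^T *m u) + n%:R * \tr (u^T *m u).
Proof.
move=> e; have ete : e^T *m e = n%:R%:M.
  apply/matrixP => i j; rewrite !ord1 !mxE (eq_bigr (fun=> 1)) => [|k _].
    by rewrite sumr_const card_ord.
  by rewrite !mxE mulr1.
have cross_term : \tr (z^T *m (e *m u)) = \tr ((e^T *m z)^T *m u).
  by rewrite mulmxA trmx_mul trmxK.
have sq_term : \tr ((e *m u)^T *m (e *m u)) = n%:R * \tr (u^T *m u).
  by rewrite trmx_mul -mulmxA (mulmxA e^T) ete mul_scalar_mx -scalemxAr mxtraceZ.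
by rewrite mxtrace_tmulBB cross_term sq_term.
Qed.

Lemma colsum_eq0_of_translate_min n p (z : 'M[R]_(n, p)) :
  let e : 'cV[R]_n := const_mx 1 in
  (forall u, \tr (z^T *m z) <= \tr ((z - e *m u)^T *m (z - e *m u))) ->
  e^T *m z = 0.
Proof.
move=> e z_min; apply: mxtrace_tmul_eq0.
have : 2 * \tr ((e^T *m z)^T *m (e^T *m z)) = 0.
  apply: (@lin_le_sqr_eq0 (n%:R * \tr ((e^T *m z)^T *m (e^T *m z)))) => s.
  have := z_min (s *: (e^T *m z)); rewrite mxtrace_tmul_translate.
  move: (e^T *m z) => a.
  rewrite [(s *: a)^T]linearZ /= -!scalemxAr -!scalemxAl !mxtraceZ; nra.
by move/eqP; rewrite mulf_eq0 pnatr_eq0 /= => /eqP.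
Qed.

End Trace.

Lemma ord3_ind (P : 'I_3 -> Prop) :
  P (inord 0) -> P (inord 1) -> P (inord 2) -> forall i, P i.
Proof.
move=> P0 P1 P2 [[|[|[|//]]] lt_i3]; [move: P0 | move: P1 | move: P2];
  by congr P; apply: val_inj; rewrite /= inordK.
Qed.

Lemma big_ord3 (V : zmodType) (F : 'I_3 -> V) :
  \sum_(j < 3) F j = F (inord 0) + F (inord 1) + F (inord 2).
Proof.
rewrite !big_ord_recr big_ord0 /= add0r.
by congr (_ + _ + _); congr F; apply: val_inj; rewrite /= inordK.
Qed.

Section Rotations.
Variable R : realType.

Definition mx3 (a b c d e f g h k : R) : 'M[R]_3 :=
  \matrix_(i < 3, j < 3) nth 0 (nth [::] [:: [:: a; b; c]; [:: d; e; f]; [:: g; h; k]] i) j.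

Lemma det_mx3 (a b c d e f g h k : R) :
  \det (mx3 a b c d e f g h k) = a * (e * k - f * h) - b * (d * k - f * g) + c * (d * h - e * g).
Proof.
rewrite (expand_det_row _ ord0) !big_ord_recr big_ord0 /= /cofactor.
rewrite !(expand_det_row _ ord0) !big_ord_recr big_ord0 /= /cofactor.
by rewrite !big_ord0 !det_mx11 !mxE /=; ring.
Qed.

Lemma is_rotation_planes (c s : R) : c ^+ 2 + s ^+ 2 = 1 ->
  [/\ is_rotation (mx3 c s 0 (- s) c 0 0 0 1),
      is_rotation (mx3 1 0 0 0 c s 0 (- s) c) &
      is_rotation (mx3 c 0 s 0 1 0 (- s) 0 c)].
Proof.
move=> cs1; split; split; try by rewrite det_mx3; nra.
all: apply/matrixP; apply: ord3_ind; apply: ord3_ind.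
all: by rewrite !mxE big_ord3 !mxE -val_eqE /= !inordK //=; nra.
Qed.

Lemma mxtrace_mul_mx3 (M : 'M[R]_3) (a b c d e f g h k : R) :
  let m i j := M (inord i) (inord j) in
  \tr (M *m mx3 a b c d e f g h k) = m 0 0 * a + m 0 1 * d + m 0 2 * g
    + m 1 0 * b + m 1 1 * e + m 1 2 * h + m 2 0 * c + m 2 1 * f + m 2 2 * k.
Proof. by rewrite /mxtrace big_ord3 !mxE !big_ord3 !mxE !inordK //=; ring. Qed.

Lemma sym_of_tr_rot_le (M : 'M[R]_3) :
  (forall P, is_rotation P -> \tr (M *m P) <= \tr M) -> M^T = M.
Proof.
move=> trM_le.
have trM : \tr M = M (inord 0) (inord 0) + M (inord 1) (inord 1) + M (inord 2) (inord 2).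
  exact: big_ord3.
have sym_plane i j (P : R -> R -> 'M[R]_3) :
    (forall c s, c ^+ 2 + s ^+ 2 = 1 -> is_rotation (P c s)) ->
    (forall c s, \tr (M *m P c s) - \tr M = (c - 1) * (M i i + M j j) + s * (M j i - M i j)) ->
    M j i = M i j.
  move=> rotP trP; apply/eqP; rewrite -subr_eq0; apply/eqP.
  apply: (@circle_le_eq0 _ (M i i + M j j)) => c s cs1.
  by rewrite -trP subr_le0; apply/trM_le/rotP.
have M01 : M (inord 1) (inord 0) = M (inord 0) (inord 1).
  apply: (sym_plane _ _ (fun c s => mx3 c s 0 (- s) c 0 0 0 1)) => c s.
    by case/is_rotation_planes.
  by rewrite mxtrace_mul_mx3 trM; ring.
have M12 : M (inord 2) (inord 1) = M (inord 1) (inord 2).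
  apply: (sym_plane _ _ (fun c s => mx3 1 0 0 0 c s 0 (- s) c)) => c s.
    by case/is_rotation_planes.
  by rewrite mxtrace_mul_mx3 trM; ring.
have M02 : M (inord 2) (inord 0) = M (inord 0) (inord 2).
  apply: (sym_plane _ _ (fun c s => mx3 c 0 s 0 1 0 (- s) 0 c)) => c s.
    by case/is_rotation_planes.
  by rewrite mxtrace_mul_mx3 trM; ring.
by apply/matrixP; apply: ord3_ind; apply: ord3_ind; rewrite mxE.
Qed.

End Rotations.

Lemma sum_cross_eq0 (R : realType) n (x D : 'M[R]_(n, 3)) (c : 'rV[R]_3) :
  (const_mx 1 : 'rV_n) *m D = 0 -> (x^T *m D)^T = x^T *m D ->
  \sum_i cross (pt x i - c) (pt D i) = 0.
Proof.
move=> /rowP colsum0 /matrixP sym.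
have skew0 a b : \sum_i ((x i a - c 0 a) * D i b - (x i b - c 0 b) * D i a) = 0.
  have D0 j : \sum_i D i j = 0.
    by have := colsum0 j; rewrite !mxE; under eq_bigr do rewrite mxE mul1r.
  have := sym b a; rewrite !mxE; under eq_bigr do rewrite mxE; under [RHS]eq_bigr do rewrite mxE.
  move=> xD_sym; rewrite sumrB.
  under eq_bigr do rewrite mulrBl; under [X in _ - X]eq_bigr do rewrite mulrBl.
  by rewrite !sumrB -!mulr_sumr !D0 xD_sym; ring.
apply/rowP; apply: ord3_ind; rewrite summxE mxE.
all: under eq_bigr do rewrite !mxE inordK //=.
all: exact: skew0.
Qed.

Section Alignment.
Variable R : realType.

Lemma RMSDE n (x y : 'M[R]_(n, 3)) : RMSD x y = Num.sqrt (n%:R^-1 * \tr ((x - y)^T *m (x - y))).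
Proof.
rewrite mxtrace_tmulE /RMSD; congr (Num.sqrt (_ * _)); apply: eq_bigr => i _.
by apply: eq_bigr => j _; rewrite !mxE.
Qed.

Lemma RMSD_le_mxtrace n (x y z : 'M[R]_(n, 3)) : RMSD x y <= RMSD x z ->
  \tr ((x - y)^T *m (x - y)) <= \tr ((x - z)^T *m (x - z)).
Proof.
case: n x y z => [|m] x y z; first by rewrite !(flatmx0 (x - _)).
rewrite !RMSDE ler_sqrt ?mulr_ge0 ?invr_ge0 ?mxtrace_tmul_ge0 //.
by rewrite ler_pM2l // invr_gt0 ltr0n.
Qed.

Variable n : nat.
Implicit Types (x y z : 'M[R]_(n, 3)) (P Q : 'M[R]_3) (T U : 'rV[R]_3).

Lemma se3_actE Q T z : se3_act Q T z = z *m Q + const_mx 1 *m T.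
Proof.
congr (_ + _); apply/matrixP => i j.
by rewrite !mxE big_ord1 !mxE mul1r.
Qed.

Lemma se3_act_comp P Q T U z :
  se3_act P U (se3_act Q T z) = se3_act (Q *m P) (T *m P + U) z.
Proof. by rewrite !se3_actE mulmxDl mulmxDr !mulmxA addrA. Qed.

Lemma is_rotation_mul P Q : is_rotation Q -> is_rotation P -> is_rotation (Q *m P).
Proof.
move=> [QQ detQ] [PP detP]; split; last by rewrite det_mulmx detQ detP mulr1.
by rewrite trmx_mul mulmxA -(mulmxA P^T) QQ mulmx1 PP.
Qed.

Lemma is_rotation1 : is_rotation (1%:M : 'M[R]_3).
Proof. by split; rewrite ?trmx1 ?mulmx1 ?det1. Qed.

Lemma RMSDAlign_min_orbit x z y : is_RMSDAlign x z y ->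
  forall P U, is_rotation P -> RMSD x y <= RMSD x (se3_act P U y).
Proof.
move=> [[Q [T [rotQ ->]]] y_min] P U rotP.
by rewrite se3_act_comp; apply/y_min/is_rotation_mul.
Qed.

Section OptimalAlignment.
Variables x y : 'M[R]_(n, 3).
Hypothesis y_min : forall P U, is_rotation P -> RMSD x y <= RMSD x (se3_act P U y).

Lemma colsum_opt : (const_mx 1 : 'rV_n) *m y = const_mx 1 *m x.
Proof.
apply/eqP; rewrite eq_sym -subr_eq0 -mulmxBr -trmx_const; apply/eqP.
apply: colsum_eq0_of_translate_min => U.
have /RMSD_le_mxtrace := y_min U is_rotation1.
by rewrite se3_actE mulmx1 opprD addrA.
Qed.

Lemma crosscov_sym_opt : (x^T *m y)^T = x^T *m y.
Proof.
apply: sym_of_tr_rot_le => P rotP.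
have [/mulmx1C PPt _] := rotP.
have yP : \tr ((y *m P)^T *m (y *m P)) = \tr (y^T *m y).
  by rewrite trmx_mul -mulmxA mxtrace_mulC -!mulmxA PPt mulmx1.
have /RMSD_le_mxtrace := y_min 0 rotP.
by rewrite se3_actE mulmx0 addr0 !mxtrace_tmulBB yP mulmxA; lra.
Qed.

End OptimalAlignment.

Lemma centroidE x : centroid x = n%:R^-1 *: (const_mx 1 *m x).
Proof.
congr (_ *: _); apply/rowP => j; rewrite summxE !mxE.
by apply: eq_bigr => i _; rewrite !mxE mul1r.
Qed.

End Alignment.

Theorem mainTheorem2 (R : realType) (n : nat) (x : 'M[R]_(n,3))
  (F : R -> 'M[R]_(n,3) -> 'M[R]_(n,3))
  (Q : R -> 'M[R]_3) (T : R -> 'rV[R]_3) :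
  ~ collinear x ->
  F 0 x = x ->
  derivable (fun t => F t x) 0 1 ->
  (forall t, is_rotation (Q t)) ->
  (forall t, is_RMSDAlign x (F t x) (se3_act (Q t) (T t) (F t x))) ->
  se3_act (Q 0) (T 0) (F 0 x) = x ->
  derivable Q 0 1 ->
  derivable T 0 1 ->
  let xt := fun t => se3_act (Q t) (T t) (F t x) in
  'D_1 (fun t => centroid (xt t)) 0 = 0 /\
  \sum_(i < n) cross (pt x i - centroid x) ('D_1 (fun t => pt (xt t) i) 0) = 0.
Proof.
move=> _ _ dF _ align _ dQ dT xt.
have xt_min t := RMSDAlign_min_orbit (align t).
have dxt : derivable xt 0 1.
  rewrite /xt; under eq_fun do rewrite se3_actE.
  apply: derivableD; first exact: derivable_mulmx.
  exact: derivable_mulmx (derivable_cst _ _ _) dT.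
have dcov : derivable (fun t => x^T *m xt t) 0 1.
  exact: derivable_mulmx (derivable_cst _ _ _) dxt.
split.
  under eq_fun do rewrite centroidE (colsum_opt (xt_min _)); exact: derive_cst.
have Dpt i : 'D_1 (fun t => pt (xt t) i) 0 = pt ('D_1 xt 0) i.
  by rewrite /pt; under eq_fun do rewrite rowE; rewrite derive_mulmxl // -rowE.
under eq_bigr do rewrite Dpt.
apply: sum_cross_eq0.
  rewrite -derive_mulmxl //; under eq_fun do rewrite (colsum_opt (xt_min _)); exact: derive_cst.
rewrite -derive_mulmxl // -derive_trmx //.
by under eq_fun do rewrite (crosscov_sym_opt (xt_min _)).
Qed.
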